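(* Let $n\ge 3$ and let $P(G(n))$ be the power graph of the gyrogroup $G(n)$ (defined in the context). Then $Int(P(G(n)))=Ce(P(G(n)))$ and $Cl(P(G(n)))=P(G(n))$.
   Context: Let $n\ge 3$ be an integer and $m=2^{n-1}$. Let $P(n)=\{0,1,\dots,m-1\}$, $H(n)=\{m,m+1,\dots,2^n-1\}$ and $G(n)=P(n)\cup H(n)$. For $i,j\in G(n)$ let $t,s,k\in P(n)$ be the residues modulo $m$ (taken in $\{0,\dots,m-1\}$) of $i+j$, $i+(\frac m2-1)j$ and $(\frac m2+1)i+(\frac m2-1)j$, respectively, and define $i\oplus j=t$ if $i,j\in P(n)$; $i\oplus j=t+m$ if $i\in P(n),j\in H(n)$; $i\oplus j=s+m$ if $i\in H(n),j\in P(n)$; $i\oplus j=k$ if $i,j\in H(n)$. Then $(G(n),\oplus)$ is a gyrogroup with identity $e=0$. Powers are defined by $a^1=a$, $a^{k+1}=a^k\oplus a$. The power graph $P(G(n))$ is the simple undirected graph with vertex set $G(n)$ in which distinct vertices $u,v$ are adjacent if and only if $u^k=v$ or $v^k=u$ for some positive integer $k$. In a connected graph $G$: a vertex $v$ is a center vertex if its eccentricity equals the radius of $G$, and the center $Ce(G)$ is the subgraph induced by the center vertices; a vertex $v$ is an interior vertex if for every vertex $u\ne v$ there is a vertex $w$ with $d(u,w)=d(u,v)+d(v,w)$, and the interior $Int(G)$ is the subgraph induced by the interior vertices. For a graph $G$ of order $N$, the closure $Cl(G)$ is obtained by repeatedly adding an edge between non-adjacent vertices whose degree sum is at least $N$ until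 no such pair remains. *)

From Stdlib Require Import ClassicalEpsilon.
From mathcomp Require Import all_boot all_order.
Set Implicit Arguments. Unset Strict Implicit. Unset Printing Implicit Defensive.

Definition pb (P : Prop) : bool :=
  if excluded_middle_informative P then true else false.

(* Operation on naturals, with m = 2^(n-1), P(n) = [0,m), H(n) = [m,2^n). *)
Definition opnat (n i j : nat) : nat :=
  let m := 2 ^ n.-1 in
  if i < m then
    if j < m then (i + j) %% m
    else (i + j) %% m + m
  else
    if j < m then (i + (m %/ 2 - 1) * j) %% m + m
    else ((m %/ 2 + 1) * i + (m %/ 2 - 1) * j) %% m.

Definition Gn (n : nat) := 'I_(2 ^ n).

(* i (+) j; insubd only acts as a default when the value were out of range,
   which never happens for n >= 3. *)
Definition gop (n : nat) (i j : Gn n) : Gn n := insubd i (opnat n i j).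

(* a^1 = a, a^(k+1) = a^k (+) a  (meaningful for k >= 1). *)
Definition gpow (n : nat) (a : Gn n) (k : nat) : Gn n :=
  iter k.-1 (fun x => gop x a) a.

Definition power_adj (n : nat) : rel (Gn n) :=
  fun u v => (u != v) &&
    pb (exists k, 0 < k /\ (gpow u k = v \/ gpow v k = u)).

Section Graph.
Variable T : finType.
Variable g : rel T.

Fixpoint walkb (k : nat) (u v : T) : bool :=
  if k is k'.+1 then [exists w, g u w && walkb k' w v] else u == v.

(* Distance: least k with a walk of length k (a shortest walk has length
   < #|T|); equals #|T| if v is unreachable from u. *)
Definition dist (u v : T) : nat := find (fun k => walkb k u v) (iota 0 #|T|).

Definition ecc (v : T) : nat := \max_(u : T) dist v u.

Definition radius : nat := \big[minn/#|T|]_(v : T) ecc v.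

Definition center_set : {set T} := [set v | ecc v == radius].

Definition interior_set : {set T} :=
  [set v | [forall u, (u != v) ==>
     [exists w, (w != v) && (dist u w == dist u v + dist v w)]]].

Definition deg (u : T) : nat := #|[set v | g u v]|.

End Graph.

Definition add_edge (T : finType) (g : rel T) (u v : T) : rel T :=
  fun x y => [|| g x y, (x == u) && (y == v) | (x == v) && (y == u)].

Definition closure_pair (T : finType) (g : rel T) (u v : T) : bool :=
  [&& u != v, ~~ g u v & #|T| <= deg g u + deg g v].

(* closure_seq g h : h arises from g by repeatedly adding an edge between a
   closure pair until no closure pair remains (Bondy--Chvatal closure). *)
Inductive closure_seq (T : finType) : rel T -> rel T -> Prop :=
  | cl_stop (g h : rel T) :
      (forall u v, ~~ closure_pair g u v) -> h =2 g -> closure_seq g h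
  | cl_step (g h : rel T) (u v : T) :
      closure_pair g u v -> closure_seq (add_edge g u v) h -> closure_seq g h.

(* Every vertex is adjacent to 0, since p^m = 0 for p in P(n) and h^2 = h (+) h = 0
   for h in H(n); the powers of h in H(n) are only h and 0 (as 0 (+) h = h), so h is
   adjacent to 0 alone and every nonzero vertex misses some vertex of H(n).  In a
   graph with a dominating vertex c in which every other vertex has a non-neighbour,
   all distances are at most 2, c is the only vertex of eccentricity 1, and c is the
   only interior vertex; hence Int = Ce = {0}.  Nonzero elements of P(n) are adjacent
   only to P(n), so every nonzero vertex has degree < m; two non-adjacent vertices
   are nonzero, so their degree sum is below 2m = |G(n)| and the closure adds no
   edge. *)

From Stdlib Require Import ClassicalEpsilon.
From mathcomp Require Import all_boot all_order zify.
Set Implicit Arguments. Unset Strict Implicit. Unset Printing Implicit Defensive.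

Lemma pbP (P : Prop) : reflect P (pb P).
Proof. by rewrite /pb; case: excluded_middle_informative => h; constructor. Qed.

Lemma card_ord_lt N k : k <= N -> #|[set i : 'I_N | i < k]| = k.
Proof.
move=> le_kN; rewrite cardsE -sum1_card (big_ord_narrow le_kN).
by rewrite sum1_card card_ord.
Qed.

Lemma bigminn_leq (I : finType) (F : I -> nat) x0 a :
  \big[minn/x0]_(i : I) F i <= F a.
Proof.
have : a \in index_enum I by rewrite mem_index_enum.
elim: (index_enum I) => [//|b s IHs]; rewrite big_cons in_cons => /orP [/eqP <-|/IHs].
  exact: geq_minl.
exact: leq_trans (geq_minr _ _).
Qed.

Lemma walkb1 (T : finType) (g : rel T) u v : walkb g 1 u v = g u v.
Proof.
apply/existsP/idP => [[w /andP [guw /eqP <-]] //| guv].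
by exists v; rewrite guv eqxx.
Qed.

Lemma closure_seq_fixed (T : finType) (g h : rel T) :
  (forall u v, ~~ closure_pair g u v) -> closure_seq g h <-> h =2 g.
Proof.
move=> no_pair; split => [cl_gh|]; last exact: cl_stop.
case: cl_gh no_pair => [// | {}g {}h u v pair_uv _ no_pair].
by rewrite (negbTE (no_pair u v)) in pair_uv.
Qed.

Section UniversalVertex.

Variables (T : finType) (g : rel T) (c : T).
Hypothesis g_sym : symmetric g.
Hypothesis c_universal : forall v, v != c -> g c v.

Lemma nonadjacent_neq_universal u v :
  u != v -> ~~ g u v -> (u != c) && (v != c).
Proof.
move=> neq_uv nguv; apply/andP; split.
  by apply: contraNneq nguv => eq_uc; rewrite eq_uc c_universal // -eq_uc eq_sym.
by apply: contraNneq nguv => eq_vc; rewrite eq_vc g_sym c_universal // -eq_vc.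
Qed.

Lemma no_closure_pair_universal :
  (forall v, v != c -> 2 * deg g v < #|T|) -> forall u v, ~~ closure_pair g u v.
Proof.
move=> deg_small u v; apply/and3P => -[neq_uv nguv].
case/andP: (nonadjacent_neq_universal neq_uv nguv) => /deg_small + /deg_small; lia.
Qed.

Hypothesis T_gt2 : 2 < #|T|.

Lemma dist_universal u v :
  dist g u v = if u == v then 0 else if g u v then 1 else 2.
Proof.
rewrite /dist; have [N -> /=] : exists N, #|T| = N.+3 by exists (#|T| - 3); lia.
rewrite -/(walkb g 2 u v) -/(walkb g 1 u v) walkb1.
case: eqVneq => [// | neq_uv]; case: ifP => // /negbT nguv.
case/andP: (nonadjacent_neq_universal neq_uv nguv) => neq_uc neq_vc.
suff -> : walkb g 2 u v by [].
apply/existsP; exists c; rewrite g_sym c_universal //=.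
by rewrite -/(walkb g 1 c v) walkb1 c_universal.
Qed.

Hypothesis nonuniversal : forall v, v != c -> exists2 w, w != v & ~~ g v w.

Lemma ecc_universal v : ecc g v = if v == c then 1 else 2.
Proof.
apply/eqP; rewrite eqn_leq; apply/andP; split.
  apply/bigmax_leqP => u _; rewrite dist_universal.
  case: (eqVneq v c) => [-> | _]; last by do ?case: ifP.
  by case: eqVneq => // neq_cu; rewrite c_universal // eq_sym.
case: eqVneq => [-> | neq_vc].
  have /card_gt0P [u] : 0 < #|[set~ c]| by rewrite cardsC1; lia.
  rewrite !inE => neq_uc; apply: leq_trans (leq_bigmax u).
  by rewrite dist_universal eq_sym (negbTE neq_uc) c_universal.
have [w neq_wv ngvw] := nonuniversal neq_vc; apply: leq_trans (leq_bigmax w).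
by rewrite dist_universal eq_sym (negbTE neq_wv) (negbTE ngvw).
Qed.

Lemma radius_universal : radius g = 1.
Proof.
apply/eqP; rewrite eqn_leq; apply/andP; split.
  by apply: leq_trans (bigminn_leq _ _ c) _; rewrite ecc_universal eqxx.
rewrite /radius; elim/big_ind: _ => [| x y | v _]; first lia.
  by rewrite leq_min => -> ->.
by rewrite ecc_universal; case: ifP.
Qed.

Lemma center_set_universal : center_set g = [set c].
Proof.
by apply/setP => v; rewrite !inE ecc_universal radius_universal; case: (v == c).
Qed.

Lemma interior_set_universal : interior_set g = [set c].
Proof.
apply/setP => v; rewrite !inE; case: (eqVneq v c) => [-> | neq_vc].
  apply/forallP => u; apply/implyP => neq_uc.
  have [w neq_wu nguw] := nonuniversal neq_uc; rewrite eq_sym in neq_wu.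
  have /andP [_ neq_wc] := nonadjacent_neq_universal neq_wu nguw.
  apply/existsP; exists w; rewrite neq_wc !dist_universal.
  rewrite (negbTE neq_wu) (negbTE nguw) (negbTE neq_uc) g_sym !c_universal //.
  by rewrite [c == w]eq_sym (negbTE neq_wc).
apply/negbTE/forallPn; exists c; rewrite negb_imply eq_sym neq_vc /=.
apply/existsPn => w; rewrite negb_and negbK !dist_universal.
rewrite [c == v]eq_sym (negbTE neq_vc) (c_universal neq_vc).
case: (eqVneq w v) => [// | neq_wv] /=.
case: (eqVneq c w) => [// | neq_cw]; rewrite c_universal 1?eq_sym //.
by case: ifP.
Qed.

End UniversalVertex.

Lemma power_adj_sym n : symmetric (@power_adj n).
Proof.
move=> u v; rewrite /power_adj eq_sym; congr andb.
by apply/pbP/pbP => -[k k_prop]; exists k; tauto.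
Qed.

Lemma gpow_ind n (Q : pred (Gn n)) a :
  Q a -> (forall x, Q x -> Q (gop x a)) -> forall k, Q (gpow a k).
Proof. by move=> Qa QS k; rewrite /gpow; elim: k.-1 => //= k' /QS. Qed.

Lemma gpowS n (a : Gn n) k : 0 < k -> gpow a k.+1 = gop (gpow a k) a.
Proof. by case: k. Qed.

Definition gzero n : Gn n := Ordinal (expn_gt0 2 n).

Section Gyrogroup.

Variable n : nat.
Hypothesis n_ge3 : 3 <= n.

Local Notation m := (2 ^ n.-1).

Lemma half_order_gt0 : 0 < m.
Proof. by rewrite expn_gt0. Qed.

Lemma half_order_ge4 : 4 <= m.
Proof. by rewrite -[4]/(2 ^ 2) leq_exp2l //; lia. Qed.

Lemma half_orderE : 2 ^ n = m * 2.
Proof. by rewrite -expnSr prednK //; lia. Qed.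

Lemma half_order_split : m %/ 2 + 1 + (m %/ 2 - 1) = m.
Proof.
have m_even : m %/ 2 * 2 = m by rewrite divnK // dvdn_exp //; lia.
by have := half_order_ge4; lia.
Qed.

Lemma opnat_lt i j : opnat n i j < 2 ^ n.
Proof.
rewrite half_orderE /opnat; have m_pos := half_order_gt0.
have := ltn_pmod (i + j) m_pos; have := ltn_pmod (i + (m %/ 2 - 1) * j) m_pos.
have := ltn_pmod ((m %/ 2 + 1) * i + (m %/ 2 - 1) * j) m_pos.
by case: ifP; case: ifP; lia.
Qed.

Lemma val_gop (i j : Gn n) : val (gop i j) = opnat n i j.
Proof. by rewrite /gop val_insubd opnat_lt. Qed.

Lemma val_gopPP (p q : Gn n) : p < m -> q < m -> val (gop p q) = (p + q) %% m.
Proof. by move=> lt_pm lt_qm; rewrite val_gop /opnat lt_pm lt_qm. Qed.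

Lemma gopHH (h : Gn n) : m <= h -> gop h h = gzero n.
Proof.
move=> le_mh; apply/val_inj; rewrite val_gop /opnat ltnNge le_mh /=.
by rewrite -mulnDl half_order_split modnMr.
Qed.

Lemma gop0H (h : Gn n) : m <= h -> gop (gzero n) h = h.
Proof.
move=> le_mh; apply/val_inj.
rewrite val_gop /opnat /= half_order_gt0 ltnNge le_mh /= add0n.
have lt_h2m : h < m * 2 by rewrite -half_orderE.
by rewrite -{1}(subnK le_mh) modnDr modn_small ?subnK //; lia.
Qed.

Lemma val_gpowP (p : Gn n) k : p < m -> 0 < k -> val (gpow p k) = k * p %% m.
Proof.
move=> lt_pm; elim: k => [// | [|k] IHk] _; first by rewrite mul1n modn_small.
rewrite gpowS // val_gopPP ?IHk ?ltn_pmod ?half_order_gt0 //.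
by rewrite modnDml -mulSnr.
Qed.

Lemma gpowP_lt (p : Gn n) k : p < m -> gpow p k < m.
Proof.
move=> lt_pm; apply: (gpow_ind (Q := fun x : Gn n => x < m)) => // x lt_xm.
by rewrite val_gopPP // ltn_pmod ?half_order_gt0.
Qed.

Lemma gpowH (h : Gn n) k : m <= h -> (gpow h k == h) || (gpow h k == gzero n).
Proof.
move=> le_mh; apply: (gpow_ind (Q := fun x => (x == h) || (x == gzero n))).
  by rewrite eqxx.
by move=> x /orP [] /eqP ->; rewrite ?gopHH ?gop0H ?eqxx ?orbT.
Qed.

Lemma power_adj0 (v : Gn n) : v != gzero n -> power_adj (gzero n) v.
Proof.
move=> nz_v; rewrite /power_adj eq_sym nz_v /=; apply/pbP.
case: (ltnP v m) => [lt_vm | le_mv].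
  exists m; split; first exact: half_order_gt0.
  by right; apply/val_inj; rewrite val_gpowP ?half_order_gt0 // modnMr.
by exists 2; split => //; right; exact: gopHH.
Qed.

Lemma power_adjH (h v : Gn n) : m <= h -> power_adj h v -> v = gzero n.
Proof.
move=> le_mh /andP [neq_hv /pbP [k [_ [hk_v | vk_h]]]].
  by have := gpowH k le_mh; rewrite hk_v eq_sym (negbTE neq_hv) => /eqP.
have [lt_vm | le_mv] := ltnP v m.
  by have := gpowP_lt k lt_vm; rewrite vk_h ltnNge le_mh.
have := gpowH k le_mv; rewrite vk_h (negbTE neq_hv) /= => /eqP h0.
by rewrite h0 leqNgt half_order_gt0 in le_mh.
Qed.

Lemma power_adjP (p v : Gn n) : p < m -> p != gzero n -> power_adj p v -> v < m.
Proof.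
move=> lt_pm nz_p /andP [neq_pv /pbP [k [_ [<- | vk_p]]]]; first exact: gpowP_lt.
rewrite ltnNge; apply: contra nz_p => le_mv.
by have := gpowH k le_mv; rewrite vk_p (negbTE neq_pv).
Qed.

Lemma exists_nonadjacent (v : Gn n) :
  v != gzero n -> exists2 w, w != v & ~~ power_adj v w.
Proof.
move=> nz_v.
suff [w neq_wv le_mw] : exists2 w : Gn n, w != v & m <= w.
  exists w => //; rewrite power_adj_sym.
  by apply: contra nz_v => /(power_adjH le_mw) ->.
have lt_m1 : m.+1 < 2 ^ n by rewrite half_orderE; have := half_order_ge4; lia.
case: (eqVneq (val v) m) => [eq_vm | neq_vm].
  by exists (Ordinal lt_m1) => //; apply/eqP => /(congr1 val) /=; rewrite eq_vm; lia.
by exists (Ordinal (ltnW lt_m1)) => //; apply: contraNneq neq_vm => <-.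
Qed.

Lemma deg_power_adj (v : Gn n) : v != gzero n -> deg (@power_adj n) v < m.
Proof.
move=> nz_v; rewrite /deg; have [lt_vm | le_mv] := ltnP v m.
  have sub : [set x | power_adj v x] \subset [set x : Gn n | x < m] :\ v.
    apply/subsetP => x; rewrite !inE => adj_vx.
    rewrite (power_adjP lt_vm nz_v adj_vx) andbT.
    by move: adj_vx; rewrite /power_adj eq_sym => /andP [].
  apply: leq_ltn_trans (subset_leq_card sub) _.
  have := cardsD1 v [set x : Gn n | x < m].
  by rewrite card_ord_lt ?half_orderE ?inE ?lt_vm; lia.
have sub : [set x | power_adj v x] \subset [set gzero n].
  by apply/subsetP => x; rewrite !inE => /(power_adjH le_mv) ->.
apply: leq_ltn_trans (subset_leq_card sub) _.
by rewrite cards1; have := half_order_ge4; lia.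
Qed.

End Gyrogroup.

Theorem mainTheorem12 (n : nat) (hn : 3 <= n) :
  interior_set (@power_adj n) = center_set (@power_adj n) /\
  (forall h : rel (Gn n),
     closure_seq (@power_adj n) h <-> h =2 @power_adj n).
Proof.
have card_gt2 : 2 < #|Gn n|.
  by rewrite card_ord half_orderE //; have := half_order_ge4 hn; lia.
have sym := @power_adj_sym n; have univ := power_adj0 hn.
split.
  rewrite (interior_set_universal sym univ card_gt2 (exists_nonadjacent hn)).
  by rewrite (center_set_universal sym univ card_gt2 (exists_nonadjacent hn)).
move=> h; apply/closure_seq_fixed/(no_closure_pair_universal sym univ) => v nz_v.
by have := deg_power_adj hn nz_v; have := half_orderE hn; rewrite card_ord; lia.
Qed.
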